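(* Let $n\ge 3$ be an integer and let $a_1,\dots,a_n$ be real numbers such that $2a_k\le a_{k-1}+a_{k+1}$ for $k=2,\dots,n-1$ and $0\le 2a_n\le a_{n-1}$. Then for all $x\in(0,\pi)$, $$L_n(x)=\sum_{j=1}^n a_j\sin(jx)-\sum_{j=1}^{n-2}a_{j+2}\sin(jx)\ge 0.$$ *)

From Stdlib Require Import Reals.
Open Scope R_scope.

Fixpoint sumR (m : nat) (f : nat -> R) : R :=
  match m with
  | O => 0
  | S k => sumR k f + f (S k)
  end.

Definition Ln (n : nat) (a : nat -> R) (x : R) : R :=
  sumR n (fun j => a j * sin (INR j * x))
  - sumR (n - 2) (fun j => a (j + 2)%nat * sin (INR j * x)).

(* Multiplying by 1 - cos x, which is positive on (0, pi), each difference
   sin((j+1)x) - sin((j-1)x) becomes sin x times a second difference of the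
   sequence 1 - cos(jx).  Summation by parts then moves these second
   differences onto the coefficients:
     (1 - cos x) L_{k+2}(x) = sin x * (sum_{j<=k} (a_j - 2a_{j+1} + a_{j+2}) (1 - cos jx)
                                      + (a_{k+1} - 2a_{k+2}) (1 - cos (k+1)x)
                                      + a_{k+2} (1 - cos (k+2)x)),
   and every term on the right is nonnegative under the convexity hypotheses. *)

From Stdlib Require Import Reals Lra Lia Psatz.
Open Scope R_scope.

Lemma sumR_nonneg (m : nat) (f : nat -> R) :
  (forall j, (1 <= j <= m)%nat -> 0 <= f j) -> 0 <= sumR m f.
Proof.
  induction m as [|m IH]; intros Hf; simpl; [lra|].
  assert (0 <= f (S m)) by (apply Hf; lia).
  assert (0 <= sumR m f) by (apply IH; intros; apply Hf; lia).
  lra.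
Qed.

Lemma one_minus_cos_ge0 (y : R) : 0 <= 1 - cos y.
Proof. pose proof (COS_bound y). lra. Qed.

Lemma one_minus_cos_mul_sin_diff (x y : R) :
  (1 - cos x) * (sin (y + x) - sin (y - x))
  = sin x * ((1 - cos (y - x)) - 2 * (1 - cos y) + (1 - cos (y + x))).
Proof. rewrite sin_plus, sin_minus, cos_plus, cos_minus. ring. Qed.

Section CosineForm.

Variables (a : nat -> R) (x : R).

Definition second_diff (j : nat) : R := a j - 2 * a (S j) + a (S (S j)).

Definition Ln_cosine_form (k : nat) : R :=
  sumR k (fun j => second_diff j * (1 - cos (INR j * x)))
  + (a (S k) - 2 * a (S (S k))) * (1 - cos (INR (S k) * x))
  + a (S (S k)) * (1 - cos (INR (S (S k)) * x)).

(* The vanishing term sin (x - x) makes the base case an instance of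
   one_minus_cos_mul_sin_diff at y = x. *)
Lemma Ln_two : Ln 2 a x = a 1%nat * sin x + a 2%nat * (sin (x + x) - sin (x - x)).
Proof.
  unfold Ln; simpl sumR; simpl INR.
  replace ((1 + 1) * x) with (x + x) by ring.
  replace (x - x) with 0 by ring.
  rewrite sin_0, Rmult_1_l. ring.
Qed.

Lemma Ln_succ (k : nat) :
  Ln (S (S (S k))) a x
  = Ln (S (S k)) a x
    + a (S (S (S k))) * (sin (INR (S (S (S k))) * x) - sin (INR (S k) * x)).
Proof.
  unfold Ln.
  replace (S (S (S k)) - 2)%nat with (S k) by lia.
  replace (S (S k) - 2)%nat with k by lia.
  cbn [sumR].
  replace (S k + 2)%nat with (S (S (S k))) by lia.
  ring.
Qed.

Lemma Ln_cosine_form_succ (k : nat) :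
  Ln_cosine_form (S k)
  = Ln_cosine_form k
    + a (S (S (S k))) * ((1 - cos (INR (S k) * x)) - 2 * (1 - cos (INR (S (S k)) * x))
                         + (1 - cos (INR (S (S (S k))) * x))).
Proof. unfold Ln_cosine_form, second_diff. cbn [sumR]. ring. Qed.

Lemma one_minus_cos_mul_Ln (k : nat) :
  (1 - cos x) * Ln (S (S k)) a x = sin x * Ln_cosine_form k.
Proof.
  induction k as [|k IH].
  - rewrite Ln_two.
    transitivity (a 1%nat * sin x * (1 - cos x)
                  + a 2%nat * ((1 - cos x) * (sin (x + x) - sin (x - x)))); [ring|].
    rewrite one_minus_cos_mul_sin_diff.
    unfold Ln_cosine_form; simpl sumR; simpl INR.
    replace (1 * x) with x by ring; replace ((1 + 1) * x) with (x + x) by ring.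
    replace (x - x) with 0 by ring; rewrite cos_0. ring.
  - rewrite Ln_succ, Ln_cosine_form_succ, !Rmult_plus_distr_l, IH.
    set (y := INR (S (S k)) * x).
    replace (INR (S k) * x) with (y - x) by (unfold y; rewrite (S_INR (S k)); ring).
    replace (INR (S (S (S k))) * x) with (y + x)
      by (unfold y; rewrite (S_INR (S (S k))); ring).
    transitivity (sin x * Ln_cosine_form k
                  + a (S (S (S k))) * ((1 - cos x) * (sin (y + x) - sin (y - x)))); [ring|].
    rewrite one_minus_cos_mul_sin_diff.
    ring.
Qed.

Lemma Ln_cosine_form_nonneg (k : nat) :
  (forall j, (1 <= j <= k)%nat -> 0 <= second_diff j) ->
  0 <= a (S k) - 2 * a (S (S k)) -> 0 <= a (S (S k)) ->
  0 <= Ln_cosine_form k.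
Proof.
  intros Hdiff Htail Hlast.
  assert (0 <= sumR k (fun j => second_diff j * (1 - cos (INR j * x)))).
  { apply sumR_nonneg; intros j Hj.
    apply Rmult_le_pos; [now apply Hdiff | apply one_minus_cos_ge0]. }
  pose proof (one_minus_cos_ge0 (INR (S k) * x)).
  pose proof (one_minus_cos_ge0 (INR (S (S k)) * x)).
  unfold Ln_cosine_form. nra.
Qed.

End CosineForm.

Theorem lemma2p4 (n : nat) (a : nat -> R)
  (hn : (3 <= n)%nat)
  (hconv : forall k : nat, (2 <= k)%nat -> (k <= n - 1)%nat ->
             2 * a k <= a (k - 1)%nat + a (k + 1)%nat)
  (hlast0 : 0 <= 2 * a n)
  (hlast1 : 2 * a n <= a (n - 1)%nat) :
  forall x : R, 0 < x < PI -> 0 <= Ln n a x.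
Proof.
  intros x [hx0 hxpi].
  destruct n as [|[|k]]; try lia.
  replace (S (S k) - 1)%nat with (S k) in hlast1 by lia.
  assert (Hsin : 0 < sin x) by (apply sin_gt_0; lra).
  assert (Hcos : cos x < 1) by (rewrite <- cos_0; apply cos_decreasing_1; lra).
  assert (Hform : 0 <= Ln_cosine_form a x k).
  { apply Ln_cosine_form_nonneg; [|lra|lra].
    intros j Hj; unfold second_diff.
    pose proof (hconv (S j) ltac:(lia) ltac:(lia)) as Hj2.
    replace (S j - 1)%nat with j in Hj2 by lia.
    replace (S j + 1)%nat with (S (S j)) in Hj2 by lia.
    lra. }
  pose proof (one_minus_cos_mul_Ln a x k) as Hid.
  assert (0 <= (1 - cos x) * Ln (S (S k)) a x) by (rewrite Hid; nra).
  nra.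
Qed.
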